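(* Let $R:\ \mu=\rho^{(0)}\to\dots\to\rho^{(l)}=\nu$ be a sequence of diagrams and let $T\in\mathcal{T}(\lambda,R)$. If $$\prod_{\substack{\alpha\in\lambda\\ T(\alpha)\text{ unbarred}}}\Big(a_{T(\alpha)-\rho(\alpha)_{T(\alpha)}}-a_{T(\alpha)-c(\alpha)}\Big)\neq 0,$$ then $T$ is $\nu$-bounded.
   Context: $a=(a_i)_{i\in\mathbb{Z}}$ are independent variables. Partitions are identified with Young diagrams; box $(i,j)$ is in row $i$, column $j$; content $c(\alpha)=j-i$; $\nu'_j$ is the length of column $j$ of $\nu$. A reverse $\lambda$-tableau is a filling $T$ of $\lambda$ by positive integers weakly decreasing along rows and strictly decreasing down columns. $\rho\to\sigma$ means $\sigma$ is obtained from $\rho$ by adding one box; for $R:\ \mu=\rho^{(0)}\to\dots\to\rho^{(l)}=\nu$, $r_i$ is the row of the box added to $\rho^{(i-1)}$. Column order: columns left to right, within a column bottom to top; $\prec$ is strict precedence. $\mathcal{T}(\lambda,R)$ consists of reverse $\lambda$-tableaux $T$ with chosen boxes $\alpha_1\prec\dots\prec\alpha_l$ such that $T(\alpha_i)=r_i$; those entries are barred, the rest unbarred. For $\alpha$ with $\alpha_i\prec\alpha\prec\alpha_{i+1}$ ($0\le i\le l$, conditions with $\alpha_0,\alpha_{l+1}$ void), $\rho(\alpha)=\rho^{(i)}$, and $\rho(\alpha)_k$ is the length of row $k$ of $\rho(\alpha)$. $T$ is $\nu$-bounded if $T(1,j)\le\nu'_j$ for all $j=1,\dots,\lambda_1$.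 *)

From HB Require Import structures.
From mathcomp Require Import all_boot all_order all_algebra.
Set Implicit Arguments. Unset Strict Implicit. Unset Printing Implicit Defensive.
Import Order.TTheory GRing.Theory Num.Theory.

(* A box (i, j): row i, column j, both 1-indexed. *)
Definition box := (nat * nat)%type.

Definition is_partition (s : seq nat) : bool :=
  sorted geq s && all (fun x => 0 < x) s.

(* length of row k (1-indexed) of the diagram rho; 0 beyond the last row *)
Definition row_len (rho : seq nat) (k : nat) : nat := nth 0 rho k.-1.

Definition in_diag (lam : seq nat) (b : box) : bool :=
  (0 < b.1 <= size lam) && (0 < b.2 <= row_len lam b.1).

Definition boxes (lam : seq nat) : seq box :=
  [seq (i, j) | i <- iota 1 (size lam), j <- iota 1 (row_len lam i)].

Definition content (b : box) : int := (b.2%:Z - b.1%:Z)%R.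

Definition col_len (nu : seq nat) (j : nat) : nat := count (fun r => j <= r) nu.

Definition reverse_tableau (lam : seq nat) (T : box -> nat) : Prop :=
  forall b, in_diag lam b ->
    [/\ 0 < T b,
        in_diag lam (b.1, b.2.+1) -> T (b.1, b.2.+1) <= T b
      & in_diag lam (b.1.+1, b.2) -> T (b.1.+1, b.2) < T b].

Definition col_prec (a b : box) : bool :=
  (a.2 < b.2) || ((a.2 == b.2) && (b.1 < a.1)).

(* R : rho^(0) -> ... -> rho^(l), given as the list of its diagrams
   (size l+1), each a partition, each obtained from the previous by adding one box *)
Definition diag_seq (rhos : seq (seq nat)) : Prop :=
  [/\ 0 < size rhos,
      forall i, i < size rhos -> is_partition (nth [::] rhos i)
    & forall i, i.+1 < size rhos ->
        exists k, nth [::] rhos i.+1 = incr_nth (nth [::] rhos i) k].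

(* the (1-indexed) row of the box added to rho to get sigma *)
Definition added_row (rho sigma : seq nat) : nat :=
  (find (fun k => nth 0 rho k != nth 0 sigma k) (iota 0 (size sigma))).+1.

Definition rrow (rhos : seq (seq nat)) (i : nat) : nat :=
  added_row (nth [::] rhos i.-1) (nth [::] rhos i).

(* (T, alphas) in T(lam, R): T a reverse lam-tableau, alphas = [alpha_1;...;alpha_l]
   boxes of lam with alpha_1 < ... < alpha_l in column order, T(alpha_i) = r_i *)
Definition in_TR (lam : seq nat) (rhos : seq (seq nat)) (T : box -> nat)
    (alphas : seq box) : Prop :=
  [/\ reverse_tableau lam T,
      size alphas = (size rhos).-1,
      all (in_diag lam) alphas,
      sorted col_prec alphas
    & forall i, 0 < i <= size alphas -> T (nth (0, 0) alphas i.-1) = rrow rhos i].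

(* rho(alpha) = rho^(i) where alpha_i < alpha < alpha_{i+1} *)
Definition rho_of (rhos : seq (seq nat)) (alphas : seq box) (b : box) : seq nat :=
  nth [::] rhos (count (fun a => col_prec a b) alphas).

Definition wfactor (R : comNzRingType) (a : int -> R) (rhos : seq (seq nat))
    (alphas : seq box) (T : box -> nat) (b : box) : R :=
  (a ((T b)%:Z - (row_len (rho_of rhos alphas b) (T b))%:Z)%R
   - a ((T b)%:Z - content b)%R)%R.

Definition nu_bounded (lam nu : seq nat) (T : box -> nat) : Prop :=
  forall j, 0 < j <= row_len lam 1 -> T (1, j) <= col_len nu j.

(* For a box b = (i, j) of lam let rho'(b) be the diagram of the chain R reached
   right after b in column order: rho'(b) = rho(b) if b is unbarred, and
   rho'(alpha_k) = rho^(k), i.e. rho(alpha_k) with one box added in row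
   r_k = T(alpha_k).  The key invariant is that every box of lam satisfies
       c(b) < rho'(b)_{T(b)}.
   It is proved by induction along each row.  For the box (i, j+1), the
   tableau inequality T(i, j+1) <= T(i, j), the monotonicity of rows of a
   partition, and the growth of the diagrams along R give the weak bound
   c(b) <= rho(b)_{T(b)} from the invariant at (i, j).  The bound becomes
   strict for rho'(b): for a barred box because a box is added in row T(b),
   for an unbarred box because equality would make its factor
   a_{T(b) - rho(b)_{T(b)}} - a_{T(b) - c(b)} vanish.  On the first row the
   invariant gives j <= nu_{T(1, j)}, that is T(1, j) <= nu'_j. *)

From HB Require Import structures.
From mathcomp Require Import all_boot all_order all_algebra.
Import GRing.Theory.

Set Implicit Arguments.
Unset Strict Implicit.
Unset Printing Implicit Defensive.

Section StrictOrderCounts.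
Context {X : eqType} {r : rel X}.
Hypotheses (r_irr : irreflexive r) (r_trans : transitive r).

Let mem_le_count (x : X) (s : seq X) : (x \in s) <= count_mem x s.
Proof. by rewrite -has_pred1 has_count; case: (count _ _). Qed.

(* The predecessors of x in s, plus x itself if present, are counted by the
   union predicate; the two parts are disjoint since r is irreflexive. *)
Lemma count_before_mem x s :
  count (r^~ x) s + (x \in s) <= count (predU (r^~ x) (pred1 x)) s.
Proof.
have no_overlap : count (predI (r^~ x) (pred1 x)) s = 0.
  by rewrite (eq_count (a2 := pred0)) ?count_pred0 // => z /=; case: (z =P x) => [->|_]; rewrite ?r_irr ?andbF.
by rewrite -[X in _ <= X]addn0 -no_overlap count_predUI leq_add2l mem_le_count.
Qed.

Lemma count_before_mono s x y : r x y ->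
  count (r^~ x) s + (x \in s) <= count (r^~ y) s.
Proof.
move=> rxy; apply: leq_trans (count_before_mem x s) _; apply: sub_count => z /=.
by case/orP=> [/r_trans-> //|/eqP->].
Qed.

(* Hence the index of the diagram reached after x never exceeds size s. *)
Lemma count_before_le_size s x : count (r^~ x) s + (x \in s) <= size s.
Proof.
by apply: leq_trans (count_before_mem x s) _; rewrite -(count_predT s) sub_count.
Qed.

Lemma count_before_nth x0 s m : sorted r s -> m < size s ->
  count (r^~ (nth x0 s m)) s = m.
Proof.
elim: s m => // x s IH m /= x_path; have x_min := order_path_min r_trans x_path.
case: m => [_|m m_lt] /=.
- rewrite r_irr add0n; apply/eqP; rewrite -leqn0 leqNgt -has_count.
  apply/hasP=> -[y y_in ryx]; move/allP: x_min => /(_ y y_in) rxy.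
  by have := r_irr y; rewrite (r_trans ryx rxy).
- move/allP: x_min => /(_ _ (mem_nth x0 m_lt)) ->.
  by rewrite IH ?(path_sorted x_path).
Qed.

End StrictOrderCounts.

Lemma col_prec_irr : irreflexive col_prec.
Proof. by move=> b; rewrite /col_prec ltnn eqxx ltnn. Qed.

Lemma col_prec_trans : transitive col_prec.
Proof.
move=> y x z; rewrite /col_prec.
case/orP=> [lt_xy|/andP[/eqP-> lt_yx]]; case/orP=> [lt_yz|/andP[/eqP<- lt_zy]].
- by rewrite (ltn_trans lt_xy lt_yz).
- by rewrite lt_xy.
- by rewrite lt_yz.
- by rewrite eqxx (ltn_trans lt_zy lt_yx) orbT.
Qed.

Lemma row_len_antitone s t t' : is_partition s -> t <= t' ->
  row_len s t' <= row_len s t.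
Proof.
case/andP=> s_sorted _ le_tt'; rewrite /row_len.
have le_pred : t.-1 <= t'.-1 by rewrite -!subn1 leq_sub2r.
have [lt_size|ge_size] := ltnP t'.-1 (size s); last by rewrite nth_default.
have geq_trans : transitive geq by move=> ? ? ? h1 h2; apply: leq_trans h2 h1.
apply: (sorted_leq_nth geq_trans leqnn 0 s_sorted) => //.
by rewrite inE (leq_ltn_trans le_pred lt_size).
Qed.

Lemma box_below_col_len nu t j : is_partition nu -> 0 < t ->
  0 < j <= row_len nu t -> t <= col_len nu j.
Proof.
move=> nu_part t_gt0 /andP[j_gt0 j_le].
have t_le : t <= size nu.
  rewrite leqNgt; apply/negP=> lt_size; move: j_le; rewrite /row_len nth_default.
    by rewrite leqn0 => /eqP j0; rewrite j0 in j_gt0.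
  by rewrite -ltnS prednK.
have top_rows : all (leq j) (take t nu).
  apply/(all_nthP 0) => k; rewrite size_takel // => lt_kt; rewrite nth_take //.
  apply: leq_trans j_le _; rewrite -[nth 0 nu k]/(row_len nu k.+1).
  exact: row_len_antitone.
rewrite all_count in top_rows.
rewrite /col_len -[in X in X <= _](size_takel t_le) -(eqP top_rows).
by rewrite -[in X in _ <= X](cat_take_drop t nu) count_cat leq_addr.
Qed.

Lemma chain_row_mono rhos m n k : diag_seq rhos -> m <= n -> n < size rhos ->
  row_len (nth [::] rhos m) k <= row_len (nth [::] rhos n) k.
Proof.
case=> _ _ step le_mn n_lt.
pose D := [pred i | i < size rhos].
have D_interval : {in D &, forall i j l, i < l < j -> l \in D}.
  by move=> i j _ j_in l /andP[_ lt_lj]; rewrite inE (ltn_trans lt_lj j_in).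
have D_step : {in D, forall i, i.+1 \in D ->
    row_len (nth [::] rhos i) k <= row_len (nth [::] rhos i.+1) k}.
  move=> i _ Si; have [p ->] := step i Si.
  by rewrite /row_len nth_incr_nth leq_addl.
apply: (homo_leq_in leqnn (fun _ _ _ h1 h2 => leq_trans h1 h2) D_interval D_step) => //.
by rewrite inE (leq_ltn_trans le_mn n_lt).
Qed.

Lemma added_row_incr_nth rho p : added_row rho (incr_nth rho p) = p.+1.
Proof.
rewrite /added_row; congr S.
have p_lt : p < size (incr_nth rho p) by rewrite size_incr_nth; case: ifP.
rewrite (@eq_find _ _ (pred1 p)); last first.
  by move=> k /=; rewrite nth_incr_nth (eq_sym k p); case: (p == k);
     rewrite ?add0n ?eqxx // (ltn_eqF (ltnSn _)).
have {1}-> : p = nth 0 (iota 0 (size (incr_nth rho p))) p by rewrite nth_iota.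
by rewrite -[find _ _]/(index _ _) index_uniq ?size_iota ?iota_uniq.
Qed.

Definition barred_before (alphas : seq box) (b : box) : nat :=
  count (col_prec^~ b) alphas.

Definition rho_after (rhos : seq (seq nat)) (alphas : seq box) (b : box) : seq nat :=
  nth [::] rhos (barred_before alphas b + (b \in alphas)).

Lemma in_diag_left lam i j : 0 < j -> in_diag lam (i, j.+1) -> in_diag lam (i, j).
Proof.
by move=> j_gt0 /andP[i_ok /andP[_ le_row]]; rewrite /in_diag i_ok j_gt0 ltnW.
Qed.

Section BarredTableau.
Variables (lam : seq nat) (rhos : seq (seq nat)) (T : box -> nat) (alphas : seq box).
Hypotheses (chainR : diag_seq rhos) (TR : in_TR lam rhos T alphas).

Lemma rho_after_index_lt b : barred_before alphas b + (b \in alphas) < size rhos.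
Proof.
case: TR => _ size_alphas _ _ _; case: chainR => size_gt0 _ _; rewrite /barred_before.
apply: leq_ltn_trans (count_before_le_size col_prec_irr alphas b) _.
by rewrite size_alphas prednK.
Qed.

Lemma rho_after_partition b : is_partition (rho_after rhos alphas b).
Proof. by case: chainR => _ part _; apply/part/rho_after_index_lt. Qed.

Lemma rho_after_barred_row b : b \in alphas ->
  row_len (rho_after rhos alphas b) (T b) = (row_len (rho_of rhos alphas b) (T b)).+1.
Proof.
case: TR => _ _ _ sorted_alphas T_barred b_in.
set m := index b alphas.
have m_lt : m < size alphas by rewrite index_mem.
have nth_m : nth (0, 0) alphas m = b by rewrite nth_index.
have before_m : barred_before alphas b = m.
  by rewrite /barred_before -{1}nth_m (count_before_nth col_prec_irr col_prec_trans).
have Sm_lt : m.+1 < size rhos by have := rho_after_index_lt b; rewrite b_in before_m addn1.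
case: chainR => _ _ step; have [p step_m] := step m Sm_lt.
have Tb : T b = p.+1 by rewrite -nth_m (T_barred m.+1) ?m_lt // /rrow step_m added_row_incr_nth.
rewrite /rho_after /rho_of -/(barred_before alphas b) before_m b_in addn1 step_m Tb.
by rewrite /row_len nth_incr_nth eqxx.
Qed.

Lemma row_after_le_next i j : 0 < j -> in_diag lam (i, j.+1) ->
  row_len (rho_after rhos alphas (i, j)) (T (i, j))
    <= row_len (rho_of rhos alphas (i, j.+1)) (T (i, j.+1)).
Proof.
move=> j_gt0 next_in; case: TR => T_rev _ _ _ _.
have box_in := in_diag_left j_gt0 next_in.
have [_ T_row _] := T_rev _ box_in.
have T_le : T (i, j.+1) <= T (i, j) by apply: T_row.
apply: leq_trans (row_len_antitone (rho_after_partition (i, j)) T_le) _.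
apply: chain_row_mono => //; last first.
  by apply: leq_ltn_trans (rho_after_index_lt (i, j.+1)) => /=; apply: leq_addr.
by apply: (count_before_mono col_prec_irr col_prec_trans); rewrite /col_prec ltnSn.
Qed.

Lemma rho_after_unbarred b : b \notin alphas ->
  rho_after rhos alphas b = rho_of rhos alphas b.
Proof. by move/negbTE=> b_out; rewrite /rho_after b_out addn0. Qed.

(* For every unbarred box, rho(b)_{T(b)} differs from the content of b
   (written without subtraction); the nonvanishing product provides this. *)
Hypothesis unbarred_row_ne : forall b, in_diag lam b -> b \notin alphas ->
  row_len (rho_of rhos alphas b) (T b) + b.1 != b.2.

Lemma row_bound_strict b : in_diag lam b ->
  b.2 <= row_len (rho_of rhos alphas b) (T b) + b.1 ->
  b.2 < row_len (rho_after rhos alphas b) (T b) + b.1.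
Proof.
move=> b_in le_b; have [b_bar|b_out] := boolP (b \in alphas).
  by rewrite rho_after_barred_row // addSn ltnS.
by rewrite rho_after_unbarred // ltn_neqAle le_b andbT eq_sym unbarred_row_ne.
Qed.

Lemma content_lt_row_after i j : in_diag lam (i, j) ->
  j < row_len (rho_after rhos alphas (i, j)) (T (i, j)) + i.
Proof.
elim: j => [|j IH] box_in; first by case/andP: box_in => _ /andP[].
apply: row_bound_strict => //=; case: j IH box_in => [|j] IH box_in.
  by case/andP: box_in => /andP[i_gt0 _] _; apply: ltn_addl.
apply: leq_trans (IH (in_diag_left _ box_in)) _ => //.
by rewrite leq_add2r row_after_le_next.
Qed.

Lemma first_row_bounded j : in_diag lam (1, j) ->
  T (1, j) <= col_len (last [::] rhos) j.
Proof.
move=> box_in; case: TR => T_rev _ _ _ _; have [T_gt0 _ _] := T_rev _ box_in.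
have [size_gt0 part _] := chainR.
have last_part : is_partition (last [::] rhos) by rewrite -nth_last part ?prednK.
have bound := content_lt_row_after box_in; rewrite addn1 ltnS in bound.
apply: box_below_col_len => //; case/andP: box_in => _ /andP[-> _] /=.
apply: leq_trans bound _; rewrite -nth_last; apply: chain_row_mono => //.
  by rewrite -ltnS prednK // rho_after_index_lt.
by rewrite prednK.
Qed.

End BarredTableau.

(* If rho(b)_{T(b)} equals the content of b, both indices of the factor of b
   coincide and the factor vanishes. *)
Lemma wfactor_neq0_row (R : comNzRingType) (a : int -> R) rhos alphas T b :
  (wfactor a rhos alphas T b != 0)%R ->
  row_len (rho_of rhos alphas b) (T b) + b.1 != b.2.
Proof.
apply: contra => /eqP row_eq.
by rewrite /wfactor /content -row_eq PoszD addrK subrr.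
Qed.

Lemma prod_factor_neq0 (R : comPzSemiRingType) (I : eqType) (s : seq I)
    (P : pred I) (F : I -> R) x :
  (\prod_(y <- s | P y) F y != 0)%R -> x \in s -> P x -> (F x != 0)%R.
Proof.
move=> prod_ne0 x_in Px; apply: contraNneq prod_ne0 => Fx0.
by rewrite (big_rem _ x_in) /= Px Fx0 mul0r.
Qed.

Lemma in_diag_boxes lam b : in_diag lam b -> b \in boxes lam.
Proof.
case: b => i j /andP[/andP[i_gt0 i_le] /andP[j_gt0 j_le]].
by apply/allpairsPdep; exists i, j; rewrite !mem_iota i_gt0 j_gt0 !add1n !ltnS.
Qed.

Unset Implicit Arguments.

Theorem lemma2p4 (R : comNzRingType) (a : int -> R) (lam mu nu : seq nat)
    (rhos : seq (seq nat)) (T : box -> nat) (alphas : seq box) :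
  is_partition lam -> diag_seq rhos ->
  nth [::] rhos 0 = mu -> last [::] rhos = nu ->
  in_TR lam rhos T alphas ->
  (\prod_(b <- boxes lam | b \notin alphas) wfactor a rhos alphas T b != 0)%R ->
  nu_bounded lam nu T.
Proof.
move=> _ chainR _ <- TR prod_ne0 j /andP[j_gt0 j_le].
have size_gt0 : 0 < size lam.
  by rewrite lt0n size_eq0; apply: contraTneq j_le => ->; rewrite -ltnNge /row_len nth_nil.
apply: (first_row_bounded chainR TR); last by rewrite /in_diag /= size_gt0 j_gt0.
move=> b b_in b_out; apply: (wfactor_neq0_row (a := a)).
exact: prod_factor_neq0 prod_ne0 (in_diag_boxes b_in) b_out.
Qed.
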